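(* For all integers $n\ge 0$ and $k=0,1,\dots,n$, $$Z^{n,k}(z,\bar z)=\frac{1}{k!}\,\frac{\partial^k}{\partial z^k}\Big[z^{n}\Big(\frac1z-\bar z\Big)^{k}\Big]=\frac{1}{k!}\,\frac{\partial^k}{\partial z^k}\Big[z^{n-k}(1-z\bar z)^{k}\Big],$$ where on the right $z$ and $\bar z$ are treated as independent variables (equivalently, $\partial/\partial z$ is the Wirtinger derivative).
   Context: Identify $\mathbb R^2$ with $\mathbb C$ via $z=x^1+ix^2$, $\bar z=x^1-ix^2$, and use $\frac{\partial}{\partial z}=\frac12\big(\frac{\partial}{\partial x^1}-i\frac{\partial}{\partial x^2}\big)$, $\frac{\partial}{\partial \bar z}=\frac12\big(\frac{\partial}{\partial x^1}+i\frac{\partial}{\partial x^2}\big)$. Zernike polynomials (in the paper's numbering) are defined for integers $n\ge 0$, $0\le k\le n$ by $$Z^{n,k}(z,\bar z)=\sum_{s=0}^{k}\binom{k}{s}\binom{n-k}{s}z^{n-k-s}(1-z\bar z)^s(-\bar z)^{k-s}\quad\text{for }0\le k\le [n/2],$$ and $Z^{n,k}=(-1)^n\,\overline{Z^{n,n-k}}$ for $[n/2]<k\le n$, where $[\cdot]$ is the integer part. (Equivalently $Z^{n,k}=(-1)^k V_{n,n-2k}$ with $V_{n,l}$ the classical Zernike polynomials.) Examples: $Z^{1,0}=z$, $Z^{1,1}=-\bar z$, $Z^{2,1}=1-2z\bar z$. *)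

From HB Require Import structures.
From mathcomp Require Import all_boot all_order all_algebra.
From mathcomp Require Import polyXY fraction.
Set Implicit Arguments. Unset Strict Implicit. Unset Printing Implicit Defensive.
Import Order.TTheory GRing.Theory Num.Theory.
Local Open Scope ring_scope.

(* Polynomials in two INDEPENDENT variables z and zbar over a numeric closed
   field R (e.g. algC, standing for the complex numbers):
   an element p : {poly {poly R}} is read as  sum_i p_i(zbar) z^i,
   i.e. the outer variable 'X is z and the inner variable 'Y := 'X%:P is zbar.
   The derivative d/dz is the formal derivative of the outer polynomial. *)

Definition zv (R : numClosedFieldType) : {poly {poly R}} := 'X.
Definition zbv (R : numClosedFieldType) : {poly {poly R}} := 'Y.

Definition conjXY (R : numClosedFieldType) (p : {poly {poly R}}) : {poly {poly R}} :=
  swapXY (map_poly (map_poly (@Num.conj R)) p).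

Definition Zern_term (R : numClosedFieldType) (n k s : nat) : {poly {poly R}} :=
  (zv R ^+ (n - k - s)%N * (1 - zv R * zbv R) ^+ s * (- zbv R) ^+ (k - s)%N)
    *+ ('C(k, s) * 'C(n - k, s))%N.

Definition Zern0 (R : numClosedFieldType) (n k : nat) : {poly {poly R}} :=
  \sum_(0 <= s < k.+1) Zern_term R n k s.

Definition Zern (R : numClosedFieldType) (n k : nat) : {poly {poly R}} :=
  if (k <= n./2)%N then Zern0 R n k
  else (-1) ^+ n * conjXY (Zern0 R n (n - k)%N).

Definition fracXY (R : numClosedFieldType) (p : {poly {poly R}})
  : {fraction {poly {poly R}}} := FracField.tofrac p.

(* Leibniz's rule expands the k-th z-derivative of z^(n-k) (1 - z zbar)^k into
   k+1 terms; the s-th one is k! C(k,s) C(n-k,s) z^(n-k-s) (-zbar)^(k-s)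
   (1 - z zbar)^s, i.e. k! times the s-th term of Z^{n,k}.  For k > [n/2] the
   defining symmetry Z^{n,k} = (-1)^n conj(Z^{n,n-k}) reduces to the same
   formula, because conjugation swaps z and zbar and maps the s-th term for
   n-k to (-1)^n times the s-th term for k. *)

From HB Require Import structures.
From mathcomp Require Import all_boot all_order all_algebra.
From mathcomp Require Import polyXY fraction.
From mathcomp Require Import ring zify.
Import Order.TTheory GRing.Theory Num.Theory.
Local Open Scope ring_scope.

Lemma derivnM (R : comNzRingType) (p q : {poly R}) k :
  (p * q)^`(k) = \sum_(i < k.+1) (p^`(k - i) * q^`(i)) *+ 'C(k, i).
Proof.
elim: k => [|k IHk]; first by rewrite big_ord1 !derivn0 bin0 mulr1n.
rewrite derivnS IHk (big_morph _ (@derivD _) (@deriv0 _)).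
under eq_bigr => i _ do rewrite derivMn derivM mulrnDl.
rewrite big_split /= [RHS]big_ord_recl /=.
under [in RHS]eq_bigr => i _ do rewrite binS mulrnDr.
rewrite big_split /= addrA; congr (_ + _).
rewrite big_ord_recl [in RHS]big_ord_recr /=.
rewrite (bin_small (ltnSn k)) mulr0n addr0 subn0 !bin0; congr (_ + _).
by apply: eq_bigr => i _ /=; rewrite -!derivnS subSS -subSn.
Qed.

Lemma derivn_exp_1subXC (R : comNzRingType) (c : R) k m :
  ((1 - 'X * c%:P) ^+ k)^`(m) = ((-c) ^+ m)%:P * (1 - 'X * c%:P) ^+ (k - m) *+ k ^_ m.
Proof.
have deriv_1subXC : (1 - 'X * c%:P)^`() = (-c)%:P.
  by rewrite derivB mulrC deriv_mulC derivX mulr1 -polyC1 derivC sub0r polyCN.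
elim: m => [|m IHm]; first by rewrite derivn0 expr0 mul1r subn0 mulr1n.
rewrite derivnS IHm derivMn derivM derivC mul0r add0r deriv_exp deriv_1subXC.
by rewrite ffactnSr mulnC mulrnA subnS exprSr polyCM mulrnAr mulrA.
Qed.

Lemma ffact_ffact_bin n k i : (i <= k)%N ->
  (k ^_ (k - i) * (n - k) ^_ i * 'C(k, i) = 'C(k, i) * 'C(n - k, i) * k`!)%N.
Proof. by move=> le_ik; rewrite -!bin_ffact bin_sub // -(bin_fact le_ik); ring. Qed.

Lemma Zern0_derivn (R : numClosedFieldType) n k : (k <= n)%N ->
  ((k`!)%:R : R)^-1%:P%:P * (zv R ^+ (n - k) * (1 - zv R * zbv R) ^+ k)^`(k)
  = Zern0 R n k.
Proof.
move=> le_kn; rewrite (mulrC (zv R ^+ _)) derivnM big_distrr /Zern0 big_mkord.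
apply: eq_bigr => i _; have le_ik : (i <= k)%N by rewrite -ltnS.
rewrite /zv /zbv derivn_exp_1subXC derivnXn subKn // /Zern_term /=.
rewrite mulrnAl mulrnAr -!mulrnA mulnCA mulnA ffact_ffact_bin // mulrnA.
have fact_cancel (p : {poly {poly R}}) : ((k`!)%:R : R)^-1%:P%:P * (p *+ k`!) = p.
  rewrite -[p *+ _]mulr_natl mulrA -!polyC_natr -!polyCM.
  by rewrite mulVf ?mul1r ?pnatr_eq0 -?lt0n ?fact_gt0.
rewrite fact_cancel rmorphXn /= polyCN.
by congr (_ *+ _); ring.
Qed.

Lemma Zern0_big_nat (R : numClosedFieldType) n m : (m <= n)%N ->
  Zern0 R n m = \sum_(0 <= s < n.+1) Zern_term R n m s.
Proof.
move=> le_mn; rewrite /Zern0 (@big_cat_nat _ _ _ m.+1 0 n.+1) //=.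
rewrite [X in _ = _ + X]big_nat_cond [X in _ = _ + X]big1 ?addr0 //.
move=> s /andP[/andP[lt_ms _] _].
by rewrite /Zern_term bin_small // mul0n mulr0n.
Qed.

Lemma conjXY_Zern_term (R : numClosedFieldType) n m s :
  conjXY (Zern_term R n m s) =
  ('Y ^+ (n - m - s) * (1 - 'Y * 'X) ^+ s * (- 'X) ^+ (m - s))
    *+ ('C(m, s) * 'C(n - m, s)).
Proof.
rewrite /conjXY /Zern_term /zv /zbv.
rewrite !(rmorphMn, rmorphM, rmorphXn, rmorphB, rmorph1, rmorphN) /=.
by rewrite map_polyX map_polyC /= map_polyX swapXY_X swapXY_Y.
Qed.

Lemma signr_swapN (R : comPzRingType) (x y : R) a b :
  (-1) ^+ (a + b) * ((-x) ^+ a * y ^+ b) = x ^+ a * (-y) ^+ b.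
Proof.
rewrite (exprNn x) (exprNn y) exprD (mulrC _ ((-1) ^+ b)) -mulrA -mulrA signrMK.
by rewrite mulrCA.
Qed.

Lemma Zern_term_conj (R : numClosedFieldType) n k s : (k <= n)%N ->
  (-1) ^+ n * conjXY (Zern_term R n (n - k) s) = Zern_term R n k s.
Proof.
move=> le_kn; rewrite conjXY_Zern_term subKn // /Zern_term /zv /zbv mulnC.
set m := ('C(k, s) * 'C(n - k, s))%N; rewrite mulrnAr.
have [-> | m_neq0] := eqVneq m 0%N; first by rewrite !mulr0n.
move: m_neq0; rewrite muln_eq0 negb_or -!lt0n !bin_gt0 => /andP[le_sk le_snk].
have sign_n : (-1) ^+ n = (-1) ^+ (n - k - s + (k - s)) :> {poly {poly R}}.
  have n_split : n = (n - k - s + (k - s) + 2 * s)%N by clear m; lia.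
  by rewrite {1}n_split exprD exprM sqrrN !expr1n mulr1.
congr (_ *+ _); rewrite sign_n (mulrC 'Y 'X) [_ * (- 'X) ^+ _]mulrAC.
by rewrite [_ * (- 'X) ^+ _]mulrC mulrA signr_swapN mulrAC.
Qed.

Lemma Zern0_conj (R : numClosedFieldType) n k : (k <= n)%N ->
  (-1) ^+ n * conjXY (Zern0 R n (n - k)) = Zern0 R n k.
Proof.
move=> le_kn; rewrite !Zern0_big_nat ?leq_subr // /conjXY !rmorph_sum /=.
by rewrite big_distrr; apply: eq_bigr => s _; apply: Zern_term_conj.
Qed.

Lemma fracXY_clear_invz (R : numClosedFieldType) n k : (k <= n)%N ->
  fracXY (zv R ^+ n) * ((fracXY (zv R))^-1 - fracXY (zbv R)) ^+ k
     = fracXY (zv R ^+ (n - k) * (1 - zv R * zbv R) ^+ k).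
Proof.
move=> le_kn; rewrite /fracXY.
have z_neq0 : FracField.tofrac (zv R) != 0 by rewrite tofrac_eq0 /zv polyX_eq0.
rewrite !(rmorphM, rmorphXn, rmorphB, rmorph1) /=.
by rewrite -{1}(subnK le_kn) exprD -mulrA -exprMn mulrBr mulfV.
Qed.

Theorem theorem1 (R : numClosedFieldType) (n k : nat) :
  (k <= n)%N ->
  fracXY (zv R ^+ n) * ((fracXY (zv R))^-1 - fracXY (zbv R)) ^+ k
     = fracXY (zv R ^+ (n - k)%N * (1 - zv R * zbv R) ^+ k)
  /\ Zern R n k
     = ((k`!)%:R : R)^-1%:P%:P * (zv R ^+ (n - k)%N * (1 - zv R * zbv R) ^+ k)^`(k).
Proof.
move=> le_kn; split; first exact: fracXY_clear_invz.
rewrite Zern0_derivn // /Zern; case: ifP => // _.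
exact: Zern0_conj.
Qed.
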